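(* Let $(X,S)$ be an $S$-metric space, $r\ge0$, and let $\{x_n\}$ be an $r$-statistically convergent sequence in $X$. If $\{\xi_n\}$ is a sequence in $st\text{-}LIM^r x_n$ converging to $\xi\in X$, then $\xi\in st\text{-}LIM^r x_n$.
   Context: An $S$-metric on a nonempty set $X$ is a function $S:X^3\to[0,\infty)$ such that for all $x,y,z,a\in X$: $S(x,y,z)=0$ if and only if $x=y=z$, and $S(x,y,z)\le S(x,x,a)+S(y,y,a)+S(z,z,a)$. A sequence $\{\xi_n\}$ converges to $\xi$ if for every $\varepsilon>0$ there is $k$ with $S(\xi_n,\xi_n,\xi)<\varepsilon$ for all $n\ge k$. For $B\subset\mathbb N$ the natural density is $\delta(B)=\lim_{n\to\infty}\frac{|\{k\in B:k\le n\}|}{n}$ when the limit exists. For $r\ge0$, $\{x_n\}$ is $r$-statistically convergent to $x$ if for every $\varepsilon>0$, $\delta(\{n\in\mathbb N: S(x_n,x_n,x)\ge r+\varepsilon\})=0$; $st\text{-}LIM^r x_n$ denotes the set of all such $x\in X$, and $\{x_n\}$ is called $r$-statistically convergent if this set is nonempty. *)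

From Stdlib Require Import Reals Lra ClassicalEpsilon.
Open Scope R_scope.
Set Implicit Arguments.

Definition is_S_metric (X : Type) (S : X -> X -> X -> R) : Prop :=
  (forall x y z, 0 <= S x y z) /\
  (forall x y z, S x y z = 0 <-> (x = y /\ y = z)) /\
  (forall x y z a, S x y z <= S x x a + S y y a + S z z a).

Definition S_converges (X : Type) (S : X -> X -> X -> R)
  (u : nat -> X) (l : X) : Prop :=
  forall eps, 0 < eps -> exists k : nat, forall n, (k <= n)%nat -> S (u n) (u n) l < eps.

Definition indic (B : nat -> Prop) (k : nat) : R :=
  if excluded_middle_informative (B k) then 1 else 0.

Fixpoint count_upto (B : nat -> Prop) (n : nat) : R :=
  match n with
  | O => 0
  | Datatypes.S m => count_upto B m + indic B (Datatypes.S m)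
  end.

Definition has_density (B : nat -> Prop) (d : R) : Prop :=
  Un_cv (fun n => count_upto B n / INR n) d.

Definition r_stat_conv (X : Type) (S : X -> X -> X -> R)
  (r : R) (u : nat -> X) (x : X) : Prop :=
  forall eps, 0 < eps -> has_density (fun n => S (u n) (u n) x >= r + eps) 0.

Definition st_LIM (X : Type) (S : X -> X -> X -> R) (r : R) (u : nat -> X) : X -> Prop :=
  fun x => r_stat_conv S r u x.

(* If [xi k] is within [eps/4] of [l], the S-metric triangle inequality and the symmetry
   [S a a b = S b b a] give [S (x n) (x n) l < S (x n) (x n) (xi k) + eps/2]; hence the set of
   [n] with [S (x n) (x n) l >= r + eps] lies inside the set of [n] with
   [S (x n) (x n) (xi k) >= r + eps/2], which has density zero because [xi k] is an
   r-statistical limit. *)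

From Stdlib Require Import Reals Lra ClassicalEpsilon.
Open Scope R_scope.

Section S_metric.

Context {X : Type} {S : X -> X -> X -> R}.
Hypothesis HS : is_S_metric S.

Lemma S_metric_diag (a : X) : S a a a = 0.
Proof. destruct HS as [_ [Heq _]]; apply Heq; auto. Qed.

Lemma S_metric_sym (a b : X) : S a a b = S b b a.
Proof.
  destruct HS as [_ [_ Htri]].
  pose proof (Htri a a b a) as Hab; pose proof (Htri b b a b) as Hba.
  rewrite S_metric_diag in Hab, Hba; lra.
Qed.

Lemma S_metric_triangle (a b c : X) : S a a c <= S a a b + 2 * S b b c.
Proof.
  destruct HS as [_ [_ Htri]].
  pose proof (Htri c c a b) as H.
  rewrite (S_metric_sym c a), (S_metric_sym c b) in H; lra.
Qed.

End S_metric.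

Lemma count_upto_ge0 (B : nat -> Prop) (n : nat) : 0 <= count_upto B n.
Proof.
  induction n as [|n IH]; simpl; [lra|].
  unfold indic; destruct (excluded_middle_informative _); lra.
Qed.

Lemma count_upto_mono {B C : nat -> Prop} (n : nat) :
  (forall k, B k -> C k) -> count_upto B n <= count_upto C n.
Proof.
  intros HBC; induction n as [|n IH]; simpl; [lra|].
  unfold indic.
  destruct (excluded_middle_informative (B _)) as [HB|];
    destruct (excluded_middle_informative (C _)); try lra.
  exfalso; auto.
Qed.

Lemma count_upto_ratio_mono {B C : nat -> Prop} (n : nat) :
  (forall k, B k -> C k) ->
  0 <= count_upto B n / INR n <= count_upto C n / INR n.
Proof.
  intros HBC; destruct n as [|n].
  - simpl; unfold Rdiv; rewrite Rmult_0_l; lra.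
  - assert (Hn : 0 < / INR (Datatypes.S n)) by (apply Rinv_0_lt_compat, lt_0_INR, Nat.lt_0_succ).
    pose proof (count_upto_ge0 B (Datatypes.S n)).
    pose proof (count_upto_mono (Datatypes.S n) HBC).
    unfold Rdiv; split; [apply Rmult_le_pos | apply Rmult_le_compat_r]; lra.
Qed.

Lemma has_density_0_incl {B C : nat -> Prop} :
  (forall k, B k -> C k) -> has_density C 0 -> has_density B 0.
Proof.
  intros HBC HC eps Heps.
  destruct (HC eps Heps) as [N HN]; exists N; intros n Hn.
  specialize (HN n Hn); unfold R_dist in *; rewrite Rminus_0_r in *.
  pose proof (count_upto_ratio_mono n HBC).
  rewrite Rabs_right in * by lra; lra.
Qed.

Theorem theorem4p4 (X : Type) (S : X -> X -> X -> R) (HS : is_S_metric S)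
  (r : R) (hr : 0 <= r) (x : nat -> X)
  (hconv : exists y, st_LIM S r x y)
  (xi : nat -> X) (l : X)
  (hxi : forall n, st_LIM S r x (xi n))
  (hlim : S_converges S xi l) :
  st_LIM S r x l.
Proof.
  intros eps Heps.
  destruct (hlim (eps / 4)) as [k Hk]; [lra|].
  specialize (Hk k (le_n k)).
  apply (has_density_0_incl (C := fun n => S (x n) (x n) (xi k) >= r + eps / 2)).
  - intros n Hn.
    pose proof (S_metric_triangle HS (x n) (xi k) l); lra.
  - apply (hxi k); lra.
Qed.
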